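(* Let $k\ge 2$ and let $p_1,\dots,p_k\ge 2$ be integers. Then the iterated permutational wreath product $W=C_{p_k}\wr\cdots\wr C_{p_1}$ satisfies $cw(W)=1$.
   Context: Each cyclic group $C_{p_i}$ acts on $\{1,\dots,p_i\}$ by cyclic shifts, and $H\wr C_{p}=H^{p}\rtimes C_{p}$ is the permutational wreath product; the iterated wreath product is associative. The commutator width $cw(G)$ is the least $n$ such that every element of $G'$ is a product of at most $n$ commutators. *)

From mathcomp Require Import all_boot all_fingroup.
Set Implicit Arguments. Unset Strict Implicit. Unset Printing Implicit Defensive.
Import GroupScope.

(* Leaves of the spherically homogeneous rooted tree with branching
   p 0, p 1, ..., p (k-1): tuples x = (x_0, ..., x_{k-1}) with x_i < p i.
   Level 0 corresponds to the top group C_{p_1}. *)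
Definition leaf (k : nat) (p : 'I_k -> nat) : finType :=
  {dffun forall i : 'I_k, 'I_(p i)}.

Definition shift k (p : 'I_k -> nat) (s : {perm leaf p}) (x : leaf p) (i : 'I_k)
  : nat := (val (s x i) + p i - val (x i)) %% p i.

(* The iterated permutational wreath product
   C_{p (k-1)} wr ... wr C_{p 0}, in its faithful action on the leaves:
   the permutations s for which, at every level i, s acts on the i-th
   coordinate by a cyclic shift depending only on the prefix x_0..x_{i-1},
   i.e.  s(x)_i = x_i + f_i(x_0,...,x_{i-1}) mod p i. *)
Definition iter_wreath k (p : 'I_k -> nat) : {set {perm leaf p}} :=
  [set s : {perm leaf p} |
    [forall i : 'I_k, forall x : leaf p, forall y : leaf p,
      [forall j : 'I_k, (j < i)%N ==> (x j == y j)] ==>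
      (shift s x i == shift s y i)]].

From mathcomp Require Import all_boot all_fingroup.
From mathcomp Require Import zify.
Set Implicit Arguments. Unset Strict Implicit. Unset Printing Implicit Defensive.
Import GroupScope.

(* For each level i, the sum modulo p i of the shifts performed at level i
   over all vertices of level i is a homomorphism from W to Z/(p i); let K be
   the intersection of their kernels, so [W, W] <= K.  Elements acting only
   along the leftmost path of the tree realise every tuple of level sums,
   hence |W : K| >= |L|, where L is the set of leaves.  The odometer a (adding
   1 to the leaf read as a mixed-radix numeral) is a transitive cycle on L, so
   its centraliser in W acts regularly and |C_W(a)| <= |L|.  The conjugacy
   class of a thus has at least |W| / |L| >= |K| elements; since a ^ y =
   a * [~ a, y] with [~ a, y] in K, every element of K, in particular of
   [W, W], is a commutator [~ a, y].  Finally [W, W] <> 1 because a does not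
   commute with the element shifting level 1 below the vertex 0 of level 1. *)

Section IterWreath.
Variables (k : nat) (p : 'I_k -> nat).
Hypothesis p_gt0 : forall i, (0 < p i)%N.
Local Notation L := (leaf p).
Local Notation W := (iter_wreath p).

Definition eq_prefix (n : nat) (x y : L) : bool :=
  [forall j : 'I_k, (j < n)%N ==> (x j == y j)].

Lemma eq_prefixP n (x y : L) :
  reflect (forall j : 'I_k, (j < n)%N -> x j = y j) (eq_prefix n x y).
Proof.
apply: (iffP forallP) => Exy j; last by apply/implyP => /Exy ->.
by move=> ltjn; apply/eqP/(implyP (Exy j)).
Qed.

Lemma eq_prefix_refl n (x : L) : eq_prefix n x x.
Proof. exact/eq_prefixP. Qed.

Lemma eq_prefix0 (x y : L) : eq_prefix 0 x y.
Proof. exact/eq_prefixP. Qed.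

Lemma eq_prefixS (o : 'I_k) (x y : L) : eq_prefix o.+1 x y = eq_prefix o x y && (x o == y o).
Proof.
apply/eq_prefixP/andP => [Exy | [/eq_prefixP Exy /eqP Exyo] j].
  by split; [apply/eq_prefixP => j ltjo; apply/Exy/ltnW | apply/eqP/Exy].
by rewrite ltnS leq_eqVlt => /orP[/eqP/val_inj -> | /Exy].
Qed.

Lemma eq_prefix_compat n (x y z : L) : eq_prefix n x y -> eq_prefix n x z = eq_prefix n y z.
Proof.
by move=> /eq_prefixP Exy; apply/eq_prefixP/eq_prefixP => Ez j ltjn; rewrite -Ez // Exy.
Qed.

Lemma iter_wreathP (s : {perm L}) :
  reflect (forall (i : 'I_k) x y, eq_prefix i x y -> shift s x i = shift s y i)
          (s \in W).
Proof.
rewrite inE; apply: (iffP forallP) => [sW i x y Exy | sW i].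
  by apply/eqP; move: (sW i) => /forallP/(_ x)/forallP/(_ y)/implyP; apply.
by apply/forallP => x; apply/forallP => y; apply/implyP => /sW ->.
Qed.

Lemma shift_lt (s : {perm L}) x i : (shift s x i < p i)%N.
Proof. by rewrite ltn_pmod. Qed.

Lemma perm_leafE (s : {perm L}) x i : val (s x i) = (val (x i) + shift s x i) %% p i.
Proof.
rewrite /shift modnDmr addnC subnK; last exact: leq_trans (ltnW (ltn_ord _)) (leq_addl _ _).
by rewrite modnDr modn_small ?ltn_ord.
Qed.

Lemma shift_unique (s : {perm L}) x i d :
  (d < p i)%N -> val (s x i) = (val (x i) + d) %% p i -> shift s x i = d.
Proof.
by move=> ltdp; rewrite perm_leafE => /eqP; rewrite eqn_modDl !modn_small ?shift_lt // => /eqP.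
Qed.

Lemma shiftM (s t : {perm L}) x i : shift (s * t) x i = (shift s x i + shift t (s x) i) %% p i.
Proof.
apply: shift_unique; first by rewrite ltn_pmod.
by rewrite permM perm_leafE (perm_leafE s) modnDml modnDmr addnA.
Qed.

Lemma shift1 (x : L) (i : 'I_k) : shift 1 x i = 0%N.
Proof. by apply: shift_unique; rewrite ?perm1 ?addn0 ?modn_small ?ltn_ord. Qed.

Lemma eq_prefix_perm (s : {perm L}) n x y :
  s \in W -> eq_prefix n x y -> eq_prefix n (s x) (s y).
Proof.
move=> /iter_wreathP sW /eq_prefixP Exy; apply/eq_prefixP => j ltjn; apply: val_inj.
rewrite !perm_leafE (Exy j ltjn) (sW j x y) //.
by apply/eq_prefixP => j' ltj'j; apply/Exy/(ltn_trans ltj'j).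
Qed.

Lemma group_set_iter_wreath : group_set W.
Proof.
apply/andP; split; first by apply/iter_wreathP => i x y _; rewrite !shift1.
apply/subsetP => _ /mulsgP[s t sW tW ->].
apply/iter_wreathP => i x y Exy.
rewrite !shiftM (iter_wreathP _ sW i x y Exy).
by rewrite (iter_wreathP _ tW i (s x) (s y) (eq_prefix_perm sW Exy)).
Qed.

Canonical iter_wreath_group := Group group_set_iter_wreath.

Definition depends_on_prefix (f : 'I_k -> L -> nat) :=
  forall (i : 'I_k) x y, eq_prefix i x y -> f i x = f i y.

Lemma depends_on_prefix_eq (F : 'I_k -> bool -> nat) z :
  depends_on_prefix (fun i x => F i (eq_prefix i x z)).
Proof. by move=> i x y /eq_prefix_compat ->. Qed.

Section Portrait.
Variables (f : 'I_k -> L -> nat) (f_prefix : depends_on_prefix f).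

Definition portrait_fun (x : L) : L :=
  [ffun i => Ordinal (ltn_pmod (val (x i) + f i x) (p_gt0 i))].

Lemma portrait_fun_inj : injective portrait_fun.
Proof.
move=> x y Efxy; suff eq_xy n : eq_prefix n x y.
  by apply/ffunP => i; apply: (eq_prefixP _ _ _ (eq_xy i.+1)).
elim: n => [|n IHn]; apply/eq_prefixP => j //.
rewrite ltnS leq_eqVlt => /orP[/eqP Ejn | ltjn]; last exact: (eq_prefixP _ _ _ IHn).
have /eqP := congr1 (fun z : L => val (z j)) Efxy.
rewrite /= !ffunE /= (@f_prefix j x y); last by rewrite Ejn.
by rewrite eqn_modDr !modn_small ?ltn_ord // => /eqP/val_inj.
Qed.

Definition portrait := perm portrait_fun_inj.

Lemma portraitE (x : L) (i : 'I_k) : val (portrait x i) = (val (x i) + f i x) %% p i.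
Proof. by rewrite permE ffunE. Qed.

Lemma shift_portrait (x : L) (i : 'I_k) : shift portrait x i = f i x %% p i.
Proof. by apply: shift_unique; rewrite ?ltn_pmod // portraitE modnDmr. Qed.

Lemma portrait_in_iter_wreath : portrait \in W.
Proof. by apply/iter_wreathP => i x y Exy; rewrite !shift_portrait (f_prefix Exy). Qed.

End Portrait.

Definition leaf0 : L := [ffun i => Ordinal (p_gt0 i)].

Lemma leaf0E (i : 'I_k) : val (leaf0 i) = 0%N.
Proof. by rewrite ffunE. Qed.

(* The vertices of level n are represented by the leaves below them that are
   0 from level n on. *)
Definition vertex_reps (n : nat) : {set L} :=
  [set x : L | [forall j : 'I_k, (n <= j)%N ==> (val (x j) == 0%N)]].

Definition truncate (n : nat) (y : L) : L :=
  [ffun j : 'I_k => if (j < n)%N then y j else leaf0 j].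

Lemma eq_prefix_truncate n y : eq_prefix n (truncate n y) y.
Proof. by apply/eq_prefixP => j ltjn; rewrite ffunE ltjn. Qed.

Lemma truncate_eq_prefix n x y : truncate n x = truncate n y -> eq_prefix n x y.
Proof.
move=> Exy; apply/eq_prefixP => j ltjn.
by have := congr1 (fun z : L => z j) Exy; rewrite !ffunE ltjn.
Qed.

Lemma truncate_vertex_reps n y : truncate n y \in vertex_reps n.
Proof.
by rewrite inE; apply/forallP => j; apply/implyP => lenj; rewrite ffunE ltnNge lenj leaf0E.
Qed.

Lemma leaf0_vertex_reps n : leaf0 \in vertex_reps n.
Proof. by rewrite inE; apply/forallP => j; rewrite leaf0E eqxx implybT. Qed.

Lemma vertex_reps_inj n x y :
  x \in vertex_reps n -> y \in vertex_reps n -> eq_prefix n x y -> x = y.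
Proof.
rewrite !inE => /forallP x0 /forallP y0 /eq_prefixP Exy; apply/ffunP => j.
case: (ltnP j n) => [/Exy // | lenj]; apply: val_inj.
by rewrite (eqP (implyP (x0 j) lenj)) (eqP (implyP (y0 j) lenj)).
Qed.

Lemma truncate_perm_inj (s : {perm L}) (i : 'I_k) : s \in W ->
  {in vertex_reps i &, injective (fun x => truncate i (s x))}.
Proof.
move=> sW x y xi yi /truncate_eq_prefix/(eq_prefix_perm (groupVr sW)).
by rewrite -!permM !mulgV !perm1; apply: vertex_reps_inj.
Qed.

Lemma vertex_reps_perm (s : {perm L}) (i : 'I_k) : s \in W ->
  [set truncate i (s x) | x in vertex_reps i] = vertex_reps i.
Proof.
move=> sW; apply/eqP; rewrite eqEcard (card_in_imset (truncate_perm_inj sW)) leqnn andbT.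
by apply/subsetP => _ /imsetP[x _ ->]; apply: truncate_vertex_reps.
Qed.

Definition level_sum (i : 'I_k) (s : {perm L}) :=
  (\sum_(x in vertex_reps i) shift s x i) %% p i.

Lemma level_sumM (i : 'I_k) : {in W &, forall s t,
  level_sum i (s * t) = (level_sum i s + level_sum i t) %% p i}.
Proof.
move=> s t sW tW; rewrite /level_sum.
under eq_bigr do rewrite shiftM.
rewrite modn_summ big_split /= modnDm; congr ((_ + _) %% _).
rewrite -[in RHS](vertex_reps_perm i sW) big_imset /=; last exact: truncate_perm_inj.
by apply: eq_bigr => x _; apply/esym/(iter_wreathP _ tW)/eq_prefix_truncate.
Qed.

Lemma level_sum1 (i : 'I_k) : level_sum i 1 = 0%N.
Proof. by rewrite /level_sum big1 ?mod0n // => x _; rewrite shift1. Qed.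

Lemma level_sumV (i : 'I_k) s : s \in W -> (level_sum i s^-1 + level_sum i s) %% p i = 0%N.
Proof. by move=> sW; rewrite -level_sumM ?groupV // mulVg level_sum1. Qed.

Definition level_ker : {set {perm L}} := [set s in W | [forall i, level_sum i s == 0%N]].

Lemma level_kerP s : reflect (s \in W /\ forall i, level_sum i s = 0%N) (s \in level_ker).
Proof.
apply: (iffP setIdP) => -[sW sK]; split=> //.
  by move=> i; apply/eqP/(forallP sK).
by apply/forallP => i; rewrite sK.
Qed.

Lemma group_set_level_ker : group_set level_ker.
Proof.
apply/andP; split; first by apply/level_kerP; split=> [|i]; rewrite ?group1 ?level_sum1.
apply/subsetP => _ /mulsgP[s t /level_kerP[sW sK] /level_kerP[tW tK] ->].
by apply/level_kerP; split=> [|i]; rewrite ?groupM ?level_sumM ?sK ?tK ?mod0n.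
Qed.

Canonical level_ker_group := Group group_set_level_ker.

Lemma level_ker_sub : level_ker \subset W.
Proof. by apply/subsetP => s /level_kerP[]. Qed.

Lemma commg_level_ker x y : x \in W -> y \in W -> [~ x, y] \in level_ker.
Proof.
move=> xW yW; apply/level_kerP; split=> [|i]; first exact: groupR.
rewrite /commg /conjg !mulgA !level_sumM ?groupM ?groupV //.
move: (level_sumV i xW) (level_sumV i yW).
move: (level_sum i x^-1) (level_sum i y^-1) (level_sum i x) (level_sum i y) => a b c d Eac Ebd.
by rewrite !modnDml -addnA modnDml addnACA -modnDm Eac Ebd mod0n.
Qed.

Lemma der_iter_wreath_sub_level_ker : [~: W, W] \subset level_ker.
Proof.
by rewrite gen_subG; apply/subsetP => _ /imset2P[x y xW yW ->]; apply: commg_level_ker.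
Qed.

(* Shifts level i by c i at the vertex 0...0 of level i and acts trivially elsewhere. *)
Definition spine_perm (c : L) :=
  portrait (depends_on_prefix_eq (fun i b => b * val (c i))%N leaf0).

Lemma level_sum_spine c (i : 'I_k) : level_sum i (spine_perm c) = val (c i).
Proof.
rewrite /level_sum (bigD1 leaf0) ?leaf0_vertex_reps //= big1 => [|x /andP[xi x_neq0]].
  by rewrite shift_portrait eq_prefix_refl mul1n addn0 !modn_small ?ltn_ord.
rewrite shift_portrait; case E: (eq_prefix i x leaf0); last by rewrite mod0n.
by case/eqP: x_neq0; apply: vertex_reps_inj E; rewrite ?leaf0_vertex_reps.
Qed.

Lemma spine_perm_in_iter_wreath c : spine_perm c \in W.
Proof. exact: portrait_in_iter_wreath. Qed.

Lemma card_leaf_le_index : (#|L| <= #|W : level_ker|)%N.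
Proof.
have inj : injective (fun c => level_ker :* spine_perm c).
  move=> c d /= Ecd; have := rcoset_refl level_ker (spine_perm c).
  rewrite Ecd mem_rcoset => /level_kerP[_ Kcd]; apply/ffunP => i; apply: val_inj.
  have [cW dW] := (spine_perm_in_iter_wreath c, spine_perm_in_iter_wreath d).
  have := level_sumM i (groupM cW (groupVr dW)) dW.
  by rewrite mulgKV Kcd add0n !level_sum_spine modn_small ?ltn_ord.
rewrite -(card_imset _ inj); apply: subset_leq_card; apply/subsetP => _ /imsetP[c _ ->].
by rewrite -rcosetE; apply: imset_f; apply: spine_perm_in_iter_wreath.
Qed.

Definition leaf_max : L := [ffun i => Ordinal (etrans (ltn_predL (p i)) (p_gt0 i))].

(* Adds 1 to the leaf read as a mixed-radix numeral with least significant
   digit at level 0: level i is shifted exactly when all lower digits carry. *)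
Definition odometer := portrait (depends_on_prefix_eq (fun _ b => nat_of_bool b) leaf_max).

Lemma odometer_in_iter_wreath : odometer \in W.
Proof. exact: portrait_in_iter_wreath. Qed.

Definition radix (n : nat) := (\prod_(j < k | (j < n)%N) p j)%N.

Definition leaf_index (n : nat) (x : L) := (\sum_(j < k | (j < n)%N) val (x j) * radix j)%N.

Lemma big_prefixS (R : Type) (idx : R) (op : Monoid.com_law idx) (o : 'I_k) (F : 'I_k -> R) :
  \big[op/idx]_(j < k | (j < o.+1)%N) F j = op (F o) (\big[op/idx]_(j < k | (j < o)%N) F j).
Proof.
rewrite (bigD1 o) ?ltnSn //=; congr (op _ _); apply: eq_bigl => j.
by rewrite ltnS -val_eqE; case: ltngtP.
Qed.

Lemma radix_gt0 n : (0 < radix n)%N.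
Proof. exact: prodn_gt0. Qed.

Lemma leaf_index_odometer n x : (n <= k)%N ->
  (leaf_index n (odometer x) + eq_prefix n x leaf_max * radix n = leaf_index n x + 1)%N.
Proof.
elim: n => [_|n IHn ltnk].
  by rewrite /leaf_index /radix eq_prefix0 !big_pred0 // => j; rewrite ltn0.
pose o := Ordinal ltnk; move: {IHn}(IHn (ltnW ltnk)).
rewrite /leaf_index /radix -[n]/(val o) !big_prefixS eq_prefixS portraitE.
rewrite -/(leaf_index o _) -/(leaf_index o x) -/(radix o) ffunE -val_eqE /=.
have := radix_gt0 o; have := ltn_ord (x o); have := p_gt0 o.
case: (eq_prefix o x leaf_max) => /= p_o_gt0 lt_xo radix_o_gt0 IH; last first.
  by rewrite addn0 modn_small //; lia.
case: (eqVneq (val (x o)) (p o).-1) => [-> | neq_xo].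
  rewrite addn1 prednK // modnn; nia.
by rewrite modn_small; move: neq_xo => /=; nia.
Qed.

Lemma leaf_index_odometerX m : (m < radix k)%N -> leaf_index k ((odometer ^+ m) leaf0) = m.
Proof.
elim: m => [_ | m IHm lt_m1].
  by rewrite expg0 perm1 /leaf_index big1 // => j _; rewrite leaf0E.
rewrite expgSr permM; set y := (odometer ^+ m) leaf0.
have := leaf_index_odometer y (leqnn k); rewrite IHm ?(ltnW lt_m1) //.
by case: eq_prefix; rewrite ?mul1n ?mul0n; lia.
Qed.

Lemma card_leaf : #|L| = radix k.
Proof.
rewrite card_dep_ffun foldrE big_image /radix [RHS](eq_bigl xpredT) => [|j].
  by apply: eq_bigr => i _; rewrite card_ord.
exact: ltn_ord.
Qed.

Lemma odometer_transitive y : exists m, y = (odometer ^+ m) leaf0.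
Proof.
have inj : injective (fun m : 'I_(radix k) => (odometer ^+ m) leaf0).
  move=> m1 m2 Em; apply: ord_inj.
  by rewrite -(leaf_index_odometerX (ltn_ord m1)) -(leaf_index_odometerX (ltn_ord m2)) /= Em.
have := inj_card_onto inj; rewrite card_ord card_leaf leqnn => /(_ isT y) /codomP[m ->].
by exists m.
Qed.

Lemma card_cent_odometer : (#|'C_W[odometer]| <= #|L|)%N.
Proof.
have inj : {in 'C_W[odometer] &, injective (fun c : {perm L} => c leaf0)}.
  move=> c d /setIP[_ /cent1P cC] /setIP[_ /cent1P dC] Ecd; apply/permP => y.
  have [m ->] := odometer_transitive y.
  by rewrite -!permM -(commuteX m cC) -(commuteX m dC) !permM /= Ecd.
by rewrite -(card_in_imset inj); apply: max_card.
Qed.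

Lemma level_ker_odometer_commutators : level_ker \subset [set [~ odometer, y] | y in W].
Proof.
set S := [set _ | y in W].
have S_ker : S \subset level_ker.
  by apply/subsetP => _ /imsetP[y yW ->]; apply: commg_level_ker odometer_in_iter_wreath yW.
rewrite -(geq_leqif (subset_leqif_card S_ker)).
have class_le : (#|odometer ^: W| <= #|S|)%N.
  apply: leq_trans (leq_imset_card (fun z => odometer * z) S); apply: subset_leq_card.
  apply/subsetP => _ /imsetP[y yW ->]; apply/imsetP.
  by exists [~ odometer, y]; [exact: imset_f | rewrite /commg mulKVg].
have := Lagrange level_ker_sub; have := Lagrange (subsetIl W 'C[odometer]).
rewrite index_cent1 => cardW_cent cardW_ker.
have L_gt0 : (0 < #|L|)%N by rewrite card_leaf radix_gt0.
rewrite -(leq_pmul2r L_gt0); apply: (@leq_trans #|W|).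
  by rewrite -cardW_ker leq_mul2l card_leaf_le_index orbT.
by rewrite -cardW_cent mulnC leq_mul // card_cent_odometer.
Qed.

Lemma der_iter_wreath_commutator g : g \in [~: W, W] ->
  exists2 y, y \in W & g = [~ odometer, y].
Proof.
move=> /(subsetP der_iter_wreath_sub_level_ker).
by move=> /(subsetP level_ker_odometer_commutators)/imsetP.
Qed.

End IterWreath.

Lemma der_iter_wreath_neq1 k (p : 'I_k -> nat) :
  (1 < k)%N -> (forall i, 1 < p i)%N -> [~: iter_wreath p, iter_wreath p] != 1.
Proof.
move=> k_gt1 p_gt1; have p_gt0 i := ltnW (p_gt1 i).
pose i0 := Ordinal (ltnW k_gt1); pose i1 := Ordinal k_gt1.
pose c : leaf p := [ffun i => if val i == 1%N then Ordinal (p_gt1 i) else leaf0 p_gt0 i].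
have eq_prefix1 (x y : leaf p) : eq_prefix i1 x y = (val (x i0) == val (y i0)).
  by rewrite (eq_prefixS i0) eq_prefix0 val_eqE.
apply/negP => /eqP der1.
have := mem_commg (odometer_in_iter_wreath p_gt0) (spine_perm_in_iter_wreath p_gt0 c).
rewrite der1 inE => /commgP/(congr1 (fun s : {perm leaf p} => val (s (leaf0 p_gt0) i1))).
rewrite /= !permM !portraitE !eq_prefix1 !portraitE !eq_prefix0 !ffunE /=.
have p0_pred_neq0 : (0 == (p i0).-1) = false.
  by apply/negbTE; rewrite eq_sym -lt0n ltn_predRL p_gt1.
rewrite p0_pred_neq0 !add0n !(modn_small (p_gt1 _)) !mod0n /= p0_pred_neq0.
by rewrite addn0 modn_small.
Qed.

Theorem corollary2 (k : nat) (p : 'I_k -> nat)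
  (hk : (2 <= k)%N) (hp : forall i : 'I_k, (2 <= p i)%N) :
  [~: iter_wreath p, iter_wreath p] != 1 /\
  (forall g, g \in [~: iter_wreath p, iter_wreath p] ->
     exists2 x, x \in iter_wreath p &
     exists2 y, y \in iter_wreath p & g = [~ x, y]).
Proof.
have p_gt0 i : (0 < p i)%N := ltnW (hp i).
split; first exact: der_iter_wreath_neq1.
move=> g /(der_iter_wreath_commutator p_gt0)[y yW ->].
by exists (odometer p_gt0); [exact: odometer_in_iter_wreath | exists y].
Qed.
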